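(* For all sufficiently large $n$ one has $k_n>0$; setting $u_n=k_n^{1/2}\langle k_n\theta\rangle$ and $v_n=k_n^{1/2}\langle k_n\theta^2\rangle$ for such $n$, $$\lim_{n\to\infty}\Big((\theta u_n-2v_n)^2+(3\theta^2-4p)u_n^2\Big)=\frac{4d^3}{3\theta^2-p};$$ that is, the points $(u_n,v_n)$ approach the ellipse $(\theta x-2y)^2+(3\theta^2-4p)x^2=\frac{4d^3}{3\theta^2-p}$.
   Context: Standing setup: $p,q\in\mathbb{Z}$ are such that $x^3-px-q$ is irreducible over $\mathbb{Q}$ with exactly one real root $\theta$ (one has $3\theta^2-4p>0$ and $3\theta^2-p>0$). $K=\mathbb{Q}(\theta)\subset\mathbb{R}$, $\mathcal{O}_K$ its ring of integers. $d$ is a positive integer with $\mathcal{O}_K\subseteq\frac1d\mathbb{Z}[\theta]$. $\lambda\in\mathcal{O}_K$ is a unit with $\lambda>1$. For $n\ge1$ the rationals $a_n,b_n,c_n$ are defined by $a_n+b_n\theta+c_n\theta^2=\lambda^n$, and $k_n=dc_n$. For $x\in\mathbb{R}$, $\langle x\rangle=x-\lfloor x+\tfrac12\rfloor$. *)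

From mathcomp Require Import all_boot all_order all_algebra.
From Stdlib Require Import ZArith Reals.

Local Open Scope ring_scope.

Definition Z2int (z : Z) : int :=
  match z with
  | Z0 => 0
  | Zpos n => (Pos.to_nat n)%:Z
  | Zneg n => - (Pos.to_nat n)%:Z
  end.

Definition cubic_irreducible_Q (p q : Z) : Prop :=
  irreducible_poly ('X^3 - ((Z2int p)%:~R : rat)%:P * 'X - ((Z2int q)%:~R : rat)%:P
                    : {poly rat}).

Local Close Scope ring_scope.
Local Open Scope R_scope.

Definition is_rat (r : R) : Prop :=
  exists (z : Z) (m : positive), r = IZR z / IZR (Zpos m).

Definition is_alg_int (r : R) : Prop :=
  exists (n : nat) (c : nat -> Z),
    r ^ (S n) + sum_f_R0 (fun i => IZR (c i) * r ^ i) n = 0.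

Definition in_K (theta r : R) : Prop :=
  exists a b c : R, is_rat a /\ is_rat b /\ is_rat c /\
    r = a + b * theta + c * theta ^ 2.

Definition in_OK (theta r : R) : Prop := in_K theta r /\ is_alg_int r.

Definition in_dZtheta (d : Z) (theta r : R) : Prop :=
  exists a b c : Z, r = (IZR a + IZR b * theta + IZR c * theta ^ 2) / IZR d.

Definition is_unit_OK (theta r : R) : Prop :=
  r <> 0 /\ in_OK theta r /\ in_OK theta (/ r).

(* <x> = x - floor(x + 1/2); Int_part is the floor function *)
Definition nearest_dev (x : R) : R := x - IZR (Int_part (x + / 2)).

(* Write elements of K in coordinates on the basis 1, theta, theta^2.  The norm N(x) is x times
   |x'|^2, where x' is a complex conjugate of x and |x'|^2 is a positive definite quadratic
   form in e = c theta - b and g = c theta^2 - a - p c.  For a positive x in O_K, d^3 N(x) is a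
   positive integer, so applying this to all powers of lambda and of 1/lambda forces
   N(lambda) = 1.  Hence |lambda_n'|^2 = lambda^-n, so e_n, g_n -> 0.  As k_n theta and
   k_n theta^2 differ from d e_n and d g_n by integers, eventually <k_n theta> = d e_n and
   <k_n theta^2> = d g_n, and the quadratic expression equals
   4 d^2 k_n |lambda_n'|^2 = 4 d^3 (lambda^n + g_n + e_n theta) / ((3 theta^2 - p) lambda^n). *)

From Stdlib Require Import ZArith Reals Lra Lia.
From mathcomp Require all_boot all_algebra Rstruct.

Module AlgebraicFacts.
Import mathcomp.boot.all_boot mathcomp.algebra.all_algebra mathcomp.reals_stdlib.Rstruct.
Import GRing.Theory.
Local Open Scope ring_scope.

Definition int2Z (z : int) : Z :=
  match z with Posz n => Z.of_nat n | Negz n => Z.opp (Z.of_nat n.+1) end.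

Lemma IZR_int2Z (z : int) : IZR (int2Z z) = (z%:~R : R).
Proof.
case: z => n; rewrite /int2Z.
  by rewrite -INR_IZR_INZ INRE.
by rewrite opp_IZR -INR_IZR_INZ INRE NegzE mulrNz.
Qed.

Lemma Z2int_IZR (z : Z) : ((Z2int z)%:~R : R) = IZR z.
Proof.
case: z => [|n|n] //=; last rewrite mulrNz -[IZR (Zneg n)]/(Ropp (IZR (Zpos n))).
all: by rewrite IZRposE INRE Pos_to_natE.
Qed.

Lemma sum_f_R0E (f : nat -> R) (m : nat) : sum_f_R0 f m = \sum_(i < m.+1) f i.
Proof.
elim: m => [|m IH]; first by rewrite big_ord_recr big_ord0 /= add0r.
by rewrite /= IH [in RHS]big_ord_recr.
Qed.

Lemma size_map_intr (h : {poly int}) : size (map_poly (intr : int -> R) h) = size h.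
Proof. by apply: size_map_inj_poly; [exact: intr_inj | exact: mulr0z]. Qed.

Lemma is_alg_intP (r : R) : is_alg_int r <-> integralOver (intr : int -> R) r.
Proof.
split.
  move=> [m [c Hc]]; rewrite sum_f_R0E RpowE in Hc.
  pose h : {poly int} := \poly_(i < m.+2) (if i == m.+1 then 1 else Z2int (c i)).
  have szh : size h = m.+2 by rewrite size_poly_eq //= eqxx.
  exists h; first by rewrite monicE lead_coefE szh coef_poly ltnSn eqxx.
  apply/rootP; rewrite (horner_coef_wide _ (n := m.+2)) ?size_map_intr ?szh //.
  rewrite big_ord_recr /= coef_map coef_poly ltnSn eqxx /= -[RHS]Hc RplusE addrC.
  congr (_ + _); first by rewrite mulr1z mul1r.
  apply: eq_bigr => i _; rewrite coef_map coef_poly ltnS ltnW //= ltn_eqF //.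
  by rewrite Z2int_IZR RpowE RmultE.
move=> [h monh /rootP hr].
have [m szh] : exists m, size h = m.+2.
  have : (1 < size h)%N.
    rewrite ltnNge; apply/negP => /size1_polyC hc0.
    move: monh hr; rewrite hc0 monicE lead_coefC => /eqP ->.
    by rewrite map_polyC /= hornerC /= => /eqP; rewrite oner_eq0.
  by case: (size h) => [|[|m]] //; exists m.
exists m, (fun i => int2Z h`_i).
move: hr; rewrite (horner_coef_wide _ (n := m.+2)) ?size_map_intr ?szh //.
rewrite big_ord_recr /= coef_map.
have /monicP := monh; rewrite lead_coefE szh /= => ->; rewrite mul1r => hr.
rewrite sum_f_R0E !RpowE RplusE -[RHS]hr addrC; congr (_ + _); first by rewrite exprS.
by apply: eq_bigr => i _; rewrite coef_map IZR_int2Z RmultE RpowE.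
Qed.

Lemma is_alg_int_pow (r : R) (n : nat) : is_alg_int r -> is_alg_int (pow r n).
Proof.
rewrite !is_alg_intP RpowE => intr_r.
elim: n => [|n IH]; first exact: integral1.
by rewrite exprS; apply: integral_mul.
Qed.

Lemma is_rat_ratr (x : R) : is_rat x -> exists u : rat, x = ratr u.
Proof.
move=> [z [m ->]]; exists ((Z2int z)%:~R / (Z2int (Zpos m))%:~R).
by rewrite fmorph_div /= !ratr_int -[Posz _]/(Z2int (Zpos m)) !Z2int_IZR RdivE.
Qed.

(* Stated with the operations of Stdlib's reals, so that it can be used outside this module. *)
Lemma cubic_rat_free (p q : Z) (t : R) : cubic_irreducible_Q p q ->
  Rminus (Rminus (pow t 3) (Rmult (IZR p) t)) (IZR q) = IZR 0 ->
  forall x y z : R, is_rat x -> is_rat y -> is_rat z ->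
  Rplus (Rplus x (Rmult y t)) (Rmult z (pow t 2)) = IZR 0 -> x = IZR 0 /\ y = IZR 0 /\ z = IZR 0.
Proof.
rewrite !R0E => irr_f f_t x y z /is_rat_ratr[u0 ->] /is_rat_ratr[u1 ->] /is_rat_ratr[u2 ->] g_t.
move: irr_f; rewrite /cubic_irreducible_Q; set f := (X in irreducible_poly X) => irr_f.
pose g : {poly rat} := \poly_(i < 3) [:: u0; u1; u2]`_i.
have [/eqP g0 | gn0] := boolP (g == 0).
  have gE i : g`_i = [:: u0; u1; u2]`_i.
    by rewrite coef_poly; case: i => [|[|[|[|i]]]].
  by move: (gE 0%N) (gE 1%N) (gE 2%N); rewrite g0 !coef0 /= => <- <- <-; rewrite rmorph0.
exfalso; have szf : (3 < size f)%N.
  rewrite ltnNge; apply/negP => /(nth_default (0 : rat)).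
  by rewrite /f !coefE /= mulr0 !subr0 => /eqP; rewrite oner_eq0.
have cop_fg : coprimep f g.
  apply: contraT => /irr_f.2/(_ (dvdp_gcdl f g)) f_gcd.
  have /(dvdp_leq gn0) : f %| g by rewrite -(eqp_dvdl _ f_gcd) dvdp_gcdr.
  by move/leq_trans/(_ (size_poly 3 _)); rewrite leqNgt szf.
have root_f : root (map_poly (ratr : rat -> R) f) t.
  apply/rootP; rewrite /f !rmorphB /= rmorphXn rmorphM /= !map_polyC map_polyX /=.
  by rewrite !hornerE !ratr_int !Z2int_IZR -f_t RminusE RminusE RmultE RpowE.
have cop_fgR : coprimep (map_poly (ratr : rat -> R) f) (map_poly ratr g).
  by rewrite coprimep_map.
have := coprimep_root cop_fgR root_f.
rewrite (horner_coef_wide _ (n := 3)) ?size_map_poly ?size_poly //.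
rewrite !big_ord_recr big_ord0 /= !coef_map /g !coef_poly /=.
by rewrite add0r expr0 mulr1 expr1 -RpowE -!RmultE -!RplusE g_t eqxx.
Qed.
End AlgebraicFacts.

Import AlgebraicFacts.
Open Scope R_scope.

Definition is_int (x : R) : Prop := exists z : Z, x = IZR z.

Lemma is_int_IZR (z : Z) : is_int (IZR z).
Proof. now exists z. Qed.

Lemma is_int_plus x y : is_int x -> is_int y -> is_int (x + y).
Proof. intros [m ->] [n ->]. exists (m + n)%Z. now rewrite plus_IZR. Qed.

Lemma is_int_opp x : is_int x -> is_int (- x).
Proof. intros [m ->]. exists (- m)%Z. now rewrite opp_IZR. Qed.

Lemma is_int_minus x y : is_int x -> is_int y -> is_int (x - y).
Proof. intros. now apply is_int_plus, is_int_opp. Qed.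

Lemma is_int_mult x y : is_int x -> is_int y -> is_int (x * y).
Proof. intros [m ->] [n ->]. exists (m * n)%Z. now rewrite mult_IZR. Qed.

Lemma is_int_pow x n : is_int x -> is_int (x ^ n).
Proof.
  intros Hx. induction n as [|n IH]; [apply (is_int_IZR 1) | now apply is_int_mult].
Qed.

Lemma is_rat_IZR (z : Z) : is_rat (IZR z).
Proof. exists z, 1%positive. now rewrite Rdiv_1_r. Qed.

Lemma is_rat_IZR_div (z d : Z) : (0 < d)%Z -> is_rat (IZR z / IZR d).
Proof. intros Hd. destruct d as [|m|m]; try lia. now exists z, m. Qed.

Lemma IZR_pos_gt0 (m : positive) : 0 < IZR (Zpos m).
Proof. apply IZR_lt. lia. Qed.

Lemma is_rat_plus x y : is_rat x -> is_rat y -> is_rat (x + y).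
Proof.
  intros [z1 [m1 ->]] [z2 [m2 ->]].
  exists (z1 * Zpos m2 + z2 * Zpos m1)%Z, (m1 * m2)%positive.
  rewrite Pos2Z.inj_mul, plus_IZR, !mult_IZR.
  pose proof (IZR_pos_gt0 m1); pose proof (IZR_pos_gt0 m2). field; lra.
Qed.

Lemma is_rat_mult x y : is_rat x -> is_rat y -> is_rat (x * y).
Proof.
  intros [z1 [m1 ->]] [z2 [m2 ->]].
  exists (z1 * z2)%Z, (m1 * m2)%positive.
  rewrite Pos2Z.inj_mul, !mult_IZR.
  pose proof (IZR_pos_gt0 m1); pose proof (IZR_pos_gt0 m2). field; lra.
Qed.

Lemma is_rat_minus x y : is_rat x -> is_rat y -> is_rat (x - y).
Proof.
  intros Hx Hy. apply is_rat_plus; [assumption|].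
  replace (- y) with (IZR (-1) * y) by ring.
  apply is_rat_mult; [apply is_rat_IZR | assumption].
Qed.

Record coord := Coord { ca : R; cb : R; cc : R }.

Definition coord_eval (t : R) (x : coord) : R := ca x + cb x * t + cc x * t ^ 2.

Definition rat_coord (x : coord) : Prop := is_rat (ca x) /\ is_rat (cb x) /\ is_rat (cc x).

(* Multiplication in Q[X]/(X^3 - P X - Q) on coordinates in the basis 1, X, X^2. *)
Definition coord_mul (P Q : R) (x y : coord) : coord :=
  let '(Coord a b c) := x in let '(Coord a' b' c') := y in
  Coord (a * a' + Q * (b * c' + c * b'))
        (a * b' + b * a' + P * (b * c' + c * b') + Q * c * c')
        (a * c' + b * b' + c * a' + P * c * c').

Fixpoint coord_pow (P Q : R) (x : coord) (n : nat) : coord :=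
  match n with
  | O => Coord 1 0 0
  | S n => coord_mul P Q (coord_pow P Q x n) x
  end.

(* The norm from Q[X]/(X^3 - P X - Q), i.e. the determinant of multiplication by a + b X + c X^2. *)
Definition coord_norm (P Q : R) (x : coord) : R :=
  let '(Coord a b c) := x in
  a ^ 3 + 2 * P * a ^ 2 * c + P ^ 2 * a * c ^ 2 - P * a * b ^ 2 - 3 * Q * a * b * c
  + Q * b ^ 3 + Q ^ 2 * c ^ 3 - P * Q * b * c ^ 2.

Definition quad_form (t P e g : R) : R := g ^ 2 - t * e * g + (t ^ 2 - P) * e ^ 2.

(* For the real root t, this is |x'|^2 where x' is the image of x under a complex embedding. *)
Definition coord_conj_norm (t P : R) (x : coord) : R :=
  quad_form t P (cc x * t - cb x) (cc x * t ^ 2 - ca x - P * cc x).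

Lemma rat_coord_mul P Q x y : is_rat P -> is_rat Q ->
  rat_coord x -> rat_coord y -> rat_coord (coord_mul P Q x y).
Proof.
  intros HP HQ. destruct x as [a b c], y as [a' b' c'].
  intros (Ha & Hb & Hc) (Ha' & Hb' & Hc'). cbn in *.
  repeat split; repeat first [apply is_rat_plus | apply is_rat_mult]; assumption.
Qed.

Lemma rat_coord_pow P Q x n : is_rat P -> is_rat Q -> rat_coord x -> rat_coord (coord_pow P Q x n).
Proof.
  intros HP HQ Hx. induction n as [|n IH]; cbn.
  - repeat split; apply is_rat_IZR.
  - now apply rat_coord_mul.
Qed.

Section Evaluation.
Variables (t P Q : R).
Hypothesis Hroot : t ^ 3 - P * t - Q = 0.

Lemma coord_eval_mul x y :
  coord_eval t (coord_mul P Q x y) = coord_eval t x * coord_eval t y.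
Proof.
  destruct x, y. unfold coord_eval; cbn. replace Q with (t ^ 3 - P * t) by lra. ring.
Qed.

Lemma coord_eval_pow x n : coord_eval t (coord_pow P Q x n) = coord_eval t x ^ n.
Proof.
  induction n as [|n IH]; cbn [coord_pow pow].
  - unfold coord_eval; cbn; ring.
  - now rewrite coord_eval_mul, IH, Rmult_comm.
Qed.

Lemma coord_norm_factor x : coord_norm P Q x = coord_eval t x * coord_conj_norm t P x.
Proof.
  destruct x. unfold coord_eval, coord_conj_norm, quad_form; cbn.
  replace Q with (t ^ 3 - P * t) by lra. ring.
Qed.

End Evaluation.

Lemma coord_norm_mul P Q x y :
  coord_norm P Q (coord_mul P Q x y) = coord_norm P Q x * coord_norm P Q y.
Proof. destruct x, y. cbn. ring. Qed.

Lemma coord_norm_pow P Q x n : coord_norm P Q (coord_pow P Q x n) = coord_norm P Q x ^ n.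
Proof.
  induction n as [|n IH]; cbn [coord_pow pow].
  - cbn. ring.
  - now rewrite coord_norm_mul, IH, Rmult_comm.
Qed.

Lemma coord_norm_scale P Q D x :
  D ^ 3 * coord_norm P Q x = coord_norm P Q (Coord (D * ca x) (D * cb x) (D * cc x)).
Proof. destruct x. cbn. ring. Qed.

Lemma is_int_coord_norm P Q x : is_int P -> is_int Q ->
  is_int (ca x) -> is_int (cb x) -> is_int (cc x) -> is_int (coord_norm P Q x).
Proof.
  destruct x as [a b c]. unfold coord_norm. cbn beta iota. intros.
  repeat first [ assumption | apply is_int_IZR | apply is_int_pow | apply is_int_minus
               | apply is_int_plus | apply is_int_mult ].
Qed.

Lemma quad_form_decomp t P e g :
  quad_form t P e g = (g - t * e / 2) ^ 2 + (3 * t ^ 2 - 4 * P) / 4 * e ^ 2.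
Proof. unfold quad_form. field. Qed.

Lemma quad_form_nonneg t P e g : 0 < 3 * t ^ 2 - 4 * P -> 0 <= quad_form t P e g.
Proof.
  intros HS. rewrite quad_form_decomp.
  pose proof (pow2_ge_0 (g - t * e / 2)); pose proof (pow2_ge_0 e).
  assert (0 <= (3 * t ^ 2 - 4 * P) / 4 * e ^ 2) by (apply Rmult_le_pos; lra). lra.
Qed.

Lemma quad_form_coercive t P e g : 0 < 3 * t ^ 2 - 4 * P ->
  e ^ 2 + g ^ 2 <= (2 + (4 + 2 * t ^ 2) / (3 * t ^ 2 - 4 * P)) * quad_form t P e g.
Proof.
  intros HS. set (S := 3 * t ^ 2 - 4 * P) in *. rewrite quad_form_decomp. fold S.
  pose proof (pow2_ge_0 (g - t * e / 2)); pose proof (pow2_ge_0 e);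
  pose proof (pow2_ge_0 (g - t * e)); pose proof (pow2_ge_0 t).
  assert (Hg : g ^ 2 = 2 * (g - t * e / 2) ^ 2 + t ^ 2 / 2 * e ^ 2 - (g - t * e) ^ 2) by field.
  replace ((2 + (4 + 2 * t ^ 2) / S) * ((g - t * e / 2) ^ 2 + S / 4 * e ^ 2))
    with (2 * (g - t * e / 2) ^ 2 + (4 + 2 * t ^ 2) / S * (g - t * e / 2) ^ 2
          + (1 + t ^ 2 / 2) * e ^ 2 + S / 2 * e ^ 2) by (field; lra).
  assert (0 <= (4 + 2 * t ^ 2) / S * (g - t * e / 2) ^ 2)
    by (apply Rmult_le_pos; [left; apply Rdiv_lt_0_compat|]; lra).
  assert (0 <= S / 2 * e ^ 2) by (apply Rmult_le_pos; lra).
  nra.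
Qed.

Lemma in_K_coord t r : in_K t r <-> exists x, rat_coord x /\ coord_eval t x = r.
Proof.
  split.
  - intros (a & b & c & Ha & Hb & Hc & ->). now exists (Coord a b c).
  - intros ([a b c] & (Ha & Hb & Hc) & <-). now exists a, b, c.
Qed.

Lemma ge1_of_pow_lower_bound C x : (forall n, 1 <= C * x ^ n) -> 1 <= x.
Proof.
  intros Hpow. pose proof (Hpow 0%nat) as H0. pose proof (Hpow 1%nat) as H1. cbn in *.
  destruct (Rlt_or_le x 1) as [Hx|]; [exfalso|assumption].
  assert (Hx0 : 0 < x) by nra.
  destruct (pow_lt_1_zero x ltac:(rewrite Rabs_right; lra) (/ C) ltac:(apply Rinv_0_lt_compat; lra))
    as [N HN].
  specialize (HN N (le_n N)). specialize (Hpow N). rewrite Rabs_right in HN by (left; now apply pow_lt).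
  apply (Rmult_lt_compat_l C) in HN; [|lra]. rewrite Rinv_r in HN; lra.
Qed.

Section NumberField.
Variables (p q : Z) (theta : R) (d : Z).
Hypothesis Hirr : cubic_irreducible_Q p q.
Hypothesis Hroot : theta ^ 3 - IZR p * theta - IZR q = 0.
Hypothesis Hdisc : 0 < 3 * theta ^ 2 - 4 * IZR p.
Hypothesis Hd : (0 < d)%Z.
Hypothesis HOK : forall r, in_OK theta r -> in_dZtheta d theta r.

Lemma coord_eval_inj x y : rat_coord x -> rat_coord y ->
  coord_eval theta x = coord_eval theta y -> x = y.
Proof.
  destruct x as [a b c], y as [a' b' c']. intros (Ha & Hb & Hc) (Ha' & Hb' & Hc') Heq.
  unfold coord_eval in Heq; cbn in *.
  assert (Hdiff : (a - a') + (b - b') * theta + (c - c') * theta ^ 2 = 0).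
  { transitivity (a + b * theta + c * theta ^ 2 - (a' + b' * theta + c' * theta ^ 2)); [ring | lra]. }
  destruct (cubic_rat_free p q theta Hirr Hroot (a - a') (b - b') (c - c')) as (Ea & Eb & Ec);
    try apply is_rat_minus; try assumption.
  f_equal; lra.
Qed.

Lemma in_OK_pow r n : in_OK theta r -> in_OK theta (r ^ n).
Proof.
  intros [HK Halg]. split; [|now apply is_alg_int_pow].
  apply in_K_coord in HK as (x & Hx & <-). apply in_K_coord.
  exists (coord_pow (IZR p) (IZR q) x n). split.
  - apply rat_coord_pow; auto using is_rat_IZR.
  - now apply coord_eval_pow.
Qed.

Lemma is_unit_OK_pow r n : is_unit_OK theta r -> is_unit_OK theta (r ^ n).
Proof.
  intros (Hr & HOKr & HOKr'). split; [now apply pow_nonzero|].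
  rewrite <- pow_inv. split; now apply in_OK_pow.
Qed.

Lemma in_OK_denom x : rat_coord x -> in_OK theta (coord_eval theta x) ->
  is_int (IZR d * ca x) /\ is_int (IZR d * cb x) /\ is_int (IZR d * cc x).
Proof.
  intros Hx Hr. destruct (HOK _ Hr) as (A & B & C & HABC).
  assert (Hd0 : IZR d <> 0) by (apply not_0_IZR; lia).
  assert (Ex : x = Coord (IZR A / IZR d) (IZR B / IZR d) (IZR C / IZR d)).
  { apply coord_eval_inj; auto.
    - repeat split; now apply is_rat_IZR_div.
    - rewrite HABC. unfold coord_eval. cbn. field. exact Hd0. }
  rewrite Ex. cbn. repeat split; [exists A | exists B | exists C]; field; exact Hd0.
Qed.

Lemma coord_norm_ge_one x : rat_coord x -> in_OK theta (coord_eval theta x) ->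
  0 < coord_eval theta x -> coord_norm (IZR p) (IZR q) x <> 0 ->
  1 <= IZR d ^ 3 * coord_norm (IZR p) (IZR q) x.
Proof.
  intros Hx Hr Hpos Hnz.
  destruct (in_OK_denom x Hx Hr) as (Ha & Hb & Hc).
  destruct (is_int_coord_norm (IZR p) (IZR q) (Coord (IZR d * ca x) (IZR d * cb x) (IZR d * cc x))
              (is_int_IZR p) (is_int_IZR q) Ha Hb Hc) as [z Hz].
  rewrite <- coord_norm_scale in Hz. rewrite Hz.
  assert (0 < IZR d ^ 3) by (apply pow_lt, IZR_lt; lia).
  assert (0 < coord_norm (IZR p) (IZR q) x).
  { rewrite (coord_norm_factor theta (IZR p) (IZR q) Hroot) in *.
    pose proof (quad_form_nonneg theta (IZR p) (cc x * theta - cb x)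
                  (cc x * theta ^ 2 - ca x - IZR p * cc x) Hdisc).
    unfold coord_conj_norm in *. destruct (Rle_lt_or_eq _ _ (Rmult_le_pos _ _ (Rlt_le _ _ Hpos) H0));
      [assumption | congruence]. }
  assert (0 < IZR z) by (rewrite <- Hz; now apply Rmult_lt_0_compat).
  apply lt_0_IZR in H1. apply IZR_le. lia.
Qed.

Lemma coord_norm_pow_lower_bound x : rat_coord x -> in_OK theta (coord_eval theta x) ->
  0 < coord_eval theta x -> coord_norm (IZR p) (IZR q) x <> 0 ->
  forall n, 1 <= IZR d ^ 3 * coord_norm (IZR p) (IZR q) x ^ n.
Proof.
  intros Hx Hr Hpos Hnz n.
  rewrite <- coord_norm_pow.
  apply coord_norm_ge_one.
  - apply rat_coord_pow; auto using is_rat_IZR.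
  - rewrite (coord_eval_pow theta _ _ Hroot). now apply in_OK_pow.
  - rewrite (coord_eval_pow theta _ _ Hroot). now apply pow_lt.
  - rewrite coord_norm_pow. now apply pow_nonzero.
Qed.

Lemma unit_coord_norm r x : is_unit_OK theta r -> 0 < r ->
  rat_coord x -> coord_eval theta x = r -> coord_norm (IZR p) (IZR q) x = 1.
Proof.
  intros (Hr0 & HOKr & HOKr') Hpos Hx Hxr.
  pose proof HOKr' as [HK _]. apply in_K_coord in HK as (y & Hy & Hyr).
  assert (Hxy : coord_norm (IZR p) (IZR q) x * coord_norm (IZR p) (IZR q) y = 1).
  { rewrite <- coord_norm_mul.
    replace (coord_mul (IZR p) (IZR q) x y) with (Coord 1 0 0); [cbn; ring|].
    apply coord_eval_inj.
    - repeat split; apply is_rat_IZR.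
    - apply rat_coord_mul; try apply is_rat_IZR; assumption.
    - rewrite (coord_eval_mul theta (IZR p) (IZR q) Hroot), Hxr, Hyr, Rinv_r by exact Hr0.
      unfold coord_eval. cbn. ring. }
  assert (Hnx : 1 <= coord_norm (IZR p) (IZR q) x).
  { apply (ge1_of_pow_lower_bound (IZR d ^ 3)), coord_norm_pow_lower_bound; rewrite ?Hxr; auto.
    intros H. rewrite H in Hxy. lra. }
  assert (Hny : 1 <= coord_norm (IZR p) (IZR q) y).
  { apply (ge1_of_pow_lower_bound (IZR d ^ 3)), coord_norm_pow_lower_bound; rewrite ?Hyr;
      auto using Rinv_0_lt_compat.
    intros H. rewrite H in Hxy. lra. }
  nra.
Qed.

Lemma unit_coord_conj_norm r x : is_unit_OK theta r -> 0 < r ->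
  rat_coord x -> coord_eval theta x = r -> r * coord_conj_norm theta (IZR p) x = 1.
Proof.
  intros Hunit Hpos Hx Hxr.
  rewrite <- Hxr, <- (coord_norm_factor theta (IZR p) (IZR q) Hroot).
  now apply (unit_coord_norm r).
Qed.

End NumberField.

Lemma cubic_unique_root_disc (P Q t : R) : t <> 0 ->
  (forall x, x ^ 3 - P * x - Q = 0 <-> x = t) -> 0 < 3 * t ^ 2 - 4 * P.
Proof.
  intros Ht Huniq. destruct (Rlt_or_le 0 (3 * t ^ 2 - 4 * P)) as [|Hle]; [assumption|exfalso].
  set (s := sqrt (4 * P - 3 * t ^ 2)).
  assert (Hs : s * s = 4 * P - 3 * t ^ 2) by (apply sqrt_sqrt; lra).
  assert (Hcofactor : forall y, y ^ 2 + t * y + t ^ 2 - P = 0 -> y = t).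
  { intros y Hy. apply Huniq. assert (Ht3 : t ^ 3 - P * t - Q = 0) by now apply Huniq.
    transitivity ((y - t) * (y ^ 2 + t * y + t ^ 2 - P) + (t ^ 3 - P * t - Q)); [ring|].
    rewrite Hy, Ht3. ring. }
  assert (Hplus : (- t + s) / 2 = t).
  { apply Hcofactor. transitivity ((3 * t ^ 2 + s * s) / 4 - P); [field | rewrite Hs; field]. }
  assert (Hminus : (- t - s) / 2 = t).
  { apply Hcofactor. transitivity ((3 * t ^ 2 + s * s) / 4 - P); [field | rewrite Hs; field]. }
  apply Ht. lra.
Qed.

Lemma nearest_dev_shift (z : Z) (y : R) : Rabs y < / 2 -> nearest_dev (IZR z + y) = y.
Proof.
  intros Hy. apply Rabs_def2 in Hy as [Hy1 Hy2]. unfold nearest_dev.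
  rewrite <- (Int_part_spec (IZR z + y + / 2) z); [ring | lra].
Qed.

Lemma Un_cv_eventually_ext (u v : nat -> R) (l : R) :
  (exists N, forall n, (N <= n)%nat -> u n = v n) -> Un_cv u l -> Un_cv v l.
Proof.
  intros [N0 Huv] Hu eps Heps. destruct (Hu eps Heps) as [N HN].
  exists (max N0 N). intros n Hn. rewrite <- Huv by lia. apply HN. lia.
Qed.

Lemma Un_cv_0_eventually_small (u : nat -> R) (eps : R) :
  Un_cv u 0 -> 0 < eps -> exists N, forall n, (N <= n)%nat -> Rabs (u n) < eps.
Proof.
  intros Hu Heps. destruct (Hu eps Heps) as [N HN]. exists N. intros n Hn.
  specialize (HN n Hn). unfold R_dist in HN. now rewrite Rminus_0_r in HN.
Qed.

Lemma Un_cv_geometric (x : R) : Rabs x < 1 -> Un_cv (pow x) 0.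
Proof.
  intros Hx eps Heps. destruct (pow_lt_1_zero x Hx eps Heps) as [N HN].
  exists N. intros n Hn. unfold R_dist. rewrite Rminus_0_r. now apply HN.
Qed.

Lemma Un_cv_inv_pow (x : R) : 1 < x -> Un_cv (pow (/ x)) 0.
Proof.
  intros Hx. apply Un_cv_geometric. rewrite Rabs_right.
  - rewrite <- Rinv_1. apply Rinv_lt_contravar; lra.
  - left. apply Rinv_0_lt_compat. lra.
Qed.

Lemma Un_cv_const (l : R) : Un_cv (fun _ => l) l.
Proof. intros eps Heps. exists O. intros n _. unfold R_dist. rewrite Rminus_diag, Rabs_R0. lra. Qed.

Lemma Un_cv_0_of_sq_le (x y : nat -> R) (C : R) :
  (forall n, x n ^ 2 <= C * y n) -> Un_cv y 0 -> Un_cv x 0.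
Proof.
  intros Hxy Hy eps Heps.
  assert (HC : 0 < Rabs C + 1) by (pose proof (Rabs_pos C); lra).
  destruct (Un_cv_0_eventually_small y (eps ^ 2 / (Rabs C + 1)) Hy) as [N HN].
  { apply Rdiv_lt_0_compat; [apply pow_lt|]; lra. }
  exists N. intros n Hn. specialize (HN n Hn). specialize (Hxy n).
  unfold R_dist. rewrite Rminus_0_r.
  assert (Hbound : C * y n <= (Rabs C + 1) * Rabs (y n)).
  { pose proof (Rle_abs (C * y n)). rewrite Rabs_mult in *. pose proof (Rabs_pos (y n)). nra. }
  apply Rmult_lt_compat_l with (r := Rabs C + 1) in HN; [|lra].
  replace ((Rabs C + 1) * (eps ^ 2 / (Rabs C + 1))) with (eps ^ 2) in HN by (field; lra).
  rewrite <- (Rabs_pos_eq eps) by lra. apply Rsqr_lt_abs_0. unfold Rsqr. nra.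
Qed.

Section EllipseLimit.
Variables (p : Z) (t D lam : R) (a b c : nat -> R).
Hypothesis Hdisc : 0 < 3 * t ^ 2 - 4 * IZR p.
Hypothesis HD : 0 < D.
Hypothesis Hlam : 1 < lam.
Hypothesis Heval : forall n, (1 <= n)%nat -> coord_eval t (Coord (a n) (b n) (c n)) = lam ^ n.
Hypothesis Hconj : forall n, (1 <= n)%nat ->
  lam ^ n * coord_conj_norm t (IZR p) (Coord (a n) (b n) (c n)) = 1.
Hypothesis Hint : forall n, (1 <= n)%nat ->
  is_int (D * a n) /\ is_int (D * b n) /\ is_int (D * c n).

(* Up to integers, d c_n t = d e_n and d c_n t^2 = d g_n. *)
Let e n := c n * t - b n.
Let g n := c n * t ^ 2 - a n - IZR p * c n.

Lemma cubic_deriv_pos : 0 < 3 * t ^ 2 - IZR p.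
Proof. pose proof (pow2_ge_0 t). lra. Qed.

Lemma conj_norm_geometric n : (1 <= n)%nat -> quad_form t (IZR p) (e n) (g n) = (/ lam) ^ n.
Proof.
  intros Hn. assert (Hl : 0 < lam ^ n) by (apply pow_lt; lra).
  rewrite pow_inv. apply (Rmult_eq_reg_l (lam ^ n)); [|lra].
  rewrite Rinv_r by lra. exact (Hconj n Hn).
Qed.

Lemma c_mul_deriv_eq n : (1 <= n)%nat -> c n * (3 * t ^ 2 - IZR p) = lam ^ n + g n + e n * t.
Proof. intros Hn. rewrite <- (Heval n Hn). unfold coord_eval, e, g. cbn. ring. Qed.

Lemma devs_cv0 : Un_cv e 0 /\ Un_cv g 0.
Proof.
  assert (Hq : Un_cv (fun n => quad_form t (IZR p) (e n) (g n)) 0).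
  { apply (Un_cv_eventually_ext (pow (/ lam))).
    - exists 1%nat. intros n Hn. symmetry. now apply conj_norm_geometric.
    - now apply Un_cv_inv_pow. }
  set (C := 2 + (4 + 2 * t ^ 2) / (3 * t ^ 2 - 4 * IZR p)).
  split; (apply (Un_cv_0_of_sq_le _ (fun n => quad_form t (IZR p) (e n) (g n)) C);
    [intros n | exact Hq]);
    pose proof (quad_form_coercive t (IZR p) (e n) (g n) Hdisc);
    pose proof (pow2_ge_0 (e n)); pose proof (pow2_ge_0 (g n)); unfold C; lra.
Qed.

Lemma devs_eventually_small : exists N, forall n, (N <= n)%nat ->
  (1 <= n)%nat /\ Rabs (D * e n) < / 2 /\ Rabs (D * g n) < / 2 /\ 0 < D * c n.
Proof.
  destruct devs_cv0 as [He Hg].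
  assert (Hs : Un_cv (fun n => g n + e n * t) 0).
  { pose proof (CV_plus _ _ _ _ Hg (CV_mult _ _ _ _ He (Un_cv_const t))) as H.
    now rewrite Rmult_0_l, Rplus_0_r in H. }
  assert (HD2 : 0 < / (2 * D)) by (apply Rinv_0_lt_compat; lra).
  destruct (Un_cv_0_eventually_small e _ He HD2) as [N1 HN1].
  destruct (Un_cv_0_eventually_small g _ Hg HD2) as [N2 HN2].
  destruct (Un_cv_0_eventually_small _ 1 Hs Rlt_0_1) as [N3 HN3].
  exists (max 1 (max N1 (max N2 N3))). intros n Hn.
  specialize (HN1 n ltac:(lia)). specialize (HN2 n ltac:(lia)). specialize (HN3 n ltac:(lia)).
  assert (Hsmall : forall x, Rabs x < / (2 * D) -> Rabs (D * x) < / 2).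
  { intros x Hx. rewrite Rabs_mult, Rabs_right by lra.
    apply Rmult_lt_compat_l with (r := D) in Hx; [|lra].
    replace (D * / (2 * D)) with (/ 2) in Hx by (field; lra). exact Hx. }
  repeat split; try lia; try now apply Hsmall.
  assert (Hl : 1 <= lam ^ n) by (apply pow_R1_Rle; lra).
  pose proof (c_mul_deriv_eq n ltac:(lia)). pose proof cubic_deriv_pos.
  apply Rabs_def2 in HN3. apply Rmult_lt_0_compat; [lra|]. nra.
Qed.

Lemma ellipse_expr_eq n : (1 <= n)%nat ->
  Rabs (D * e n) < / 2 -> Rabs (D * g n) < / 2 -> 0 < D * c n ->
  (let k := D * c n in
   let u := sqrt k * nearest_dev (k * t) in
   let v := sqrt k * nearest_dev (k * t ^ 2) in
   (t * u - 2 * v) ^ 2 + (3 * t ^ 2 - 4 * IZR p) * u ^ 2)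
  = 4 * D ^ 3 / (3 * t ^ 2 - IZR p) * (1 + (g n + e n * t) * (/ lam) ^ n).
Proof.
  intros Hn He Hg Hk. destruct (Hint n Hn) as ([za Hza] & [zb Hzb] & [zc Hzc]). cbv zeta.
  replace (D * c n * t) with (IZR zb + D * e n) by (unfold e; rewrite <- Hzb; ring).
  replace (D * c n * t ^ 2) with (IZR (za + p * zc) + D * g n)
    by (unfold g; rewrite plus_IZR, mult_IZR, <- Hza, <- Hzc; ring).
  rewrite !nearest_dev_shift by assumption.
  transitivity (sqrt (D * c n) ^ 2 * D ^ 2 * (4 * quad_form t (IZR p) (e n) (g n)));
    [unfold quad_form; ring|].
  rewrite pow2_sqrt, (conj_norm_geometric n Hn) by lra.
  replace (D * c n) with (D * (lam ^ n + g n + e n * t) / (3 * t ^ 2 - IZR p))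
    by (rewrite <- (c_mul_deriv_eq n Hn); pose proof cubic_deriv_pos; field; lra).
  assert (Hl : lam ^ n <> 0) by (apply pow_nonzero; lra).
  rewrite pow_inv. pose proof cubic_deriv_pos. field. split; lra.
Qed.

Lemma ellipse_approx_cv :
  Un_cv (fun n => 4 * D ^ 3 / (3 * t ^ 2 - IZR p) * (1 + (g n + e n * t) * (/ lam) ^ n))
        (4 * D ^ 3 / (3 * t ^ 2 - IZR p)).
Proof.
  destruct devs_cv0 as [He Hg].
  assert (Hgeo := Un_cv_inv_pow lam Hlam).
  pose proof (CV_mult _ _ _ _ (Un_cv_const (4 * D ^ 3 / (3 * t ^ 2 - IZR p)))
               (CV_plus _ _ _ _ (Un_cv_const 1)
                  (CV_mult _ _ _ _ (CV_plus _ _ _ _ Hg (CV_mult _ _ _ _ He (Un_cv_const t))) Hgeo)))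
    as H.
  replace (4 * D ^ 3 / (3 * t ^ 2 - IZR p) * (1 + (0 + 0 * t) * 0))
    with (4 * D ^ 3 / (3 * t ^ 2 - IZR p)) in H by ring.
  exact H.
Qed.

Lemma ellipse_limit :
  let k := fun n : nat => D * c n in
  (exists N : nat, forall n : nat, (N <= n)%nat -> 0 < k n) /\
  Un_cv (fun n : nat =>
           let u := sqrt (k n) * nearest_dev (k n * t) in
           let v := sqrt (k n) * nearest_dev (k n * t ^ 2) in
           (t * u - 2 * v) ^ 2 + (3 * t ^ 2 - 4 * IZR p) * u ^ 2)
        (4 * D ^ 3 / (3 * t ^ 2 - IZR p)).
Proof.
  intros k. destruct devs_eventually_small as [N HN]. split.
  - exists N. intros n Hn. apply (HN n Hn).
  - apply (Un_cv_eventually_ext _ _ _) with (2 := ellipse_approx_cv).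
    exists N. intros n Hn. destruct (HN n Hn) as (H1 & He & Hg & Hk).
    symmetry. now apply ellipse_expr_eq.
Qed.

End EllipseLimit.
Theorem mainTheorem18
  (p q : Z) (theta : R) (d : Z) (lambda : R) (a b c : nat -> R)
  (Hirr : cubic_irreducible_Q p q)
  (Hroot : forall x : R, x ^ 3 - IZR p * x - IZR q = 0 <-> x = theta)
  (Hd : (0 < d)%Z)
  (HOK : forall r : R, in_OK theta r -> in_dZtheta d theta r)
  (Hunit : is_unit_OK theta lambda)
  (Hlam : 1 < lambda)
  (Habc : forall n : nat, (1 <= n)%nat ->
     is_rat (a n) /\ is_rat (b n) /\ is_rat (c n) /\
     a n + b n * theta + c n * theta ^ 2 = lambda ^ n) :
  let k := fun n : nat => IZR d * c n in
  (exists N : nat, forall n : nat, (N <= n)%nat -> 0 < k n) /\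
  Un_cv (fun n : nat =>
           let u := sqrt (k n) * nearest_dev (k n * theta) in
           let v := sqrt (k n) * nearest_dev (k n * theta ^ 2) in
           (theta * u - 2 * v) ^ 2 + (3 * theta ^ 2 - 4 * IZR p) * u ^ 2)
        (4 * IZR d ^ 3 / (3 * theta ^ 2 - IZR p)).
Proof.
  assert (Hroot3 : theta ^ 3 - IZR p * theta - IZR q = 0) by now apply Hroot.
  assert (Htheta : theta <> 0).
  { intros H0. destruct (cubic_rat_free p q theta Hirr Hroot3 0 1 0) as (_ & H1 & _);
      try apply is_rat_IZR; [rewrite H0; ring | lra]. }
  assert (Hdisc := cubic_unique_root_disc _ _ _ Htheta Hroot).
  assert (Hcoord : forall n, (1 <= n)%nat -> rat_coord (Coord (a n) (b n) (c n))
                     /\ coord_eval theta (Coord (a n) (b n) (c n)) = lambda ^ n).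
  { intros n Hn. destruct (Habc n Hn) as (Ha & Hb & Hc & E). now repeat split. }
  apply (ellipse_limit p theta (IZR d) lambda a b c Hdisc).
  - now apply IZR_lt.
  - exact Hlam.
  - intros n Hn. apply Hcoord, Hn.
  - intros n Hn. destruct (Hcoord n Hn) as [Hx Hx_eval].
    apply (unit_coord_conj_norm p q theta d Hirr Hroot3 Hdisc Hd HOK (lambda ^ n)); auto.
    + now apply (is_unit_OK_pow p q).
    + apply pow_lt. lra.
  - intros n Hn. destruct (Hcoord n Hn) as [Hx Hx_eval].
    apply (in_OK_denom p q theta d Hirr Hroot3 Hd HOK (Coord (a n) (b n) (c n)) Hx).
    rewrite Hx_eval. apply (in_OK_pow p q theta Hroot3), Hunit.
    Qed.
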